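(* If a graph $G$ with $n\ge 2$ vertices contains a matching pair $(M_1,M_2)$ of size $X=|M_1|+|M_2|$, then the $(1,2)$-TSP cost of $G$ is at most $2n-\tfrac{3}{4}X$.
   Context: A matching pair of $G$ is a pair $(M_1,M_2)$ of edge-disjoint matchings of $G$; its size is $|M_1|+|M_2|$. The $(1,2)$-TSP cost of a graph $G=(V,E)$ on $n$ vertices is $\min\sum_{i=1}^n D(v_i,v_{i+1})$ over cyclic orderings $(v_1,\dots,v_n)$ of $V$ ($v_{n+1}=v_1$), where $D(u,v)=1$ if $uv\in E$ and $D(u,v)=2$ otherwise. *)

From mathcomp Require Import all_boot.
Set Implicit Arguments. Unset Strict Implicit. Unset Printing Implicit Defensive.

(* A simple graph: vertex set T (finite), adjacency e : rel T, assumed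
   symmetric and irreflexive in the theorem. Edges are 2-element vertex sets. *)
Definition edges (T : finType) (e : rel T) : {set {set T}} :=
  [set A : {set T} | [exists x, exists y, e x y && (A == [set x; y])]].

Definition is_matching (T : finType) (e : rel T) (M : {set {set T}}) : Prop :=
  M \subset edges e /\
  (forall A B, A \in M -> B \in M -> A != B -> [disjoint A & B]).

Definition matching_pair (T : finType) (e : rel T) (M1 M2 : {set {set T}}) : Prop :=
  is_matching e M1 /\ is_matching e M2 /\ M1 :&: M2 = set0.

Definition D12 (T : finType) (e : rel T) (x y : T) : nat := if e x y then 1 else 2.

(* cost of the cyclic ordering given by the sequence s = (v_1,...,v_n):
   sum of D(v_i, v_{i+1}) with v_{n+1} = v_1 *)
Definition tour_cost (T : finType) (e : rel T) (s : seq T) : nat :=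
  \sum_(p <- zip s (rot 1 s)) D12 e p.1 p.2.

(* (1,2)-TSP cost: minimum of tour_cost over all orderings of the vertex set.
   The initial value 2*#|T| is an upper bound on every tour cost, so it does
   not affect the minimum. *)
Definition tsp12_cost (T : finType) (e : rel T) : nat :=
  \big[minn/(2 * #|T|)%N]_(s <- permutations (enum T)) tour_cost e s.

From mathcomp Require Import all_boot zify.
Set Implicit Arguments. Unset Strict Implicit. Unset Printing Implicit Defensive.

(* Let F be the graph whose edges are those of M1 :|: M2 ([pair_rel]).  As a
   union of two matchings, F has maximum degree 2, and it is triangle-free:
   two incident edges of F lie in different matchings, and a triangle cannot
   be properly 2-edge-coloured.  The combinatorial core is a statement about
   any such graph F ([three_quarter_ordering]): its vertices can be listed
   as s so that at least 3/4 of the edges of F join consecutive vertices of s.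
   It is proved by strong induction on a vertex set S, peeling off a vertex
   of degree <= 1 (or a short path starting at one) and strengthening the
   statement with a "bonus" for orderings that start at such a vertex.
   Finally, the tour following s pays 1 for each consecutive F-edge (an edge
   of G) and at most 2 otherwise, so tsp12_cost e <= 2|T| - (3/4)|F|, and
   |F| = |M1| + |M2| since the matchings are edge-disjoint. *)

Lemma edgesP (T : finType) (e : rel T) (A : {set T}) :
  reflect (exists x y, e x y /\ A = [set x; y]) (A \in edges e).
Proof.
rewrite inE; apply: (iffP existsP) => [[x /existsP[y /andP[exy /eqP ->]]]|[x [y [exy ->]]]].
  by exists x, y.
by exists x; apply/existsP; exists y; rewrite exy eqxx.
Qed.

Lemma edge_pair (T : finType) (e : rel T) (a b : T) :
  symmetric e -> [set a; b] \in edges e -> e a b.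
Proof.
move=> e_sym /edgesP[x [y [exy E]]].
have /set2P xab : x \in [set a; b] by rewrite E set21.
have /set2P yab : y \in [set a; b] by rewrite E set22.
have /set2P axy : a \in [set x; y] by rewrite -E set21.
have /set2P bxy : b \in [set x; y] by rewrite -E set22.
by case: xab yab axy bxy => ? [] ? [] ? [] ?; subst; rewrite // e_sym.
Qed.

Fixpoint adj_count (T : Type) (f : rel T) (s : seq T) : nat :=
  if s is x :: ((y :: _) as t) then f x y + adj_count f t else 0.

Lemma adj_count_cons (T : Type) (f : rel T) x s : adj_count f s <= adj_count f (x :: s).
Proof. by case: s => [|y t] //=; exact: leq_addl. Qed.

Lemma adj_count_cons2 (T : Type) (f : rel T) x y t :
  adj_count f (x :: y :: t) = f x y + adj_count f (y :: t).
Proof. by []. Qed.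

Section PathCover.

Variables (T : finType) (f : rel T).
Hypothesis f_sym : symmetric f.
Hypothesis f_irr : irreflexive f.
Hypothesis f_deg2 : forall v, #|[set u | f v u]| <= 2.
Hypothesis f_tri : forall a b c, f a b -> f a c -> f b c -> False.

Definition nbhd (S : {set T}) (v : T) : {set T} := [set u in S | f v u].

Definition inner_edges (S : {set T}) : {set {set T}} := [set A in edges f | A \subset S].

Definition spans (S : {set T}) (s : seq T) : Prop := uniq s /\ s =i S.

Definition covers_well (S : {set T}) (k : nat) (s : seq T) : Prop :=
  spans S s /\ 3 * #|inner_edges S| + k <= 4 * adj_count f s.

(* The three statements proved simultaneously by induction on [S]: an
   ordering exists; it may start at any vertex of degree <= 1; and it gains
   a margin of 2 if that vertex begins a path v - u - w in [S]. *)
Definition orderable (S : {set T}) : Prop := exists s, covers_well S 0 s.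

Definition orderable_from (S : {set T}) (v : T) (k : nat) : Prop :=
  exists t, covers_well S k (v :: t).

Definition pendant_start (S : {set T}) : Prop :=
  forall v, v \in S -> #|nbhd S v| <= 1 -> orderable_from S v 0.

Definition pendant_path_start (S : {set T}) : Prop :=
  forall v u w, v \in S -> #|nbhd S v| <= 1 -> u \in nbhd S v ->
    w \in nbhd S u -> w != v -> orderable_from S v 2.

Lemma nbhd_le2 (S : {set T}) v : #|nbhd S v| <= 2.
Proof.
apply: leq_trans (f_deg2 v); apply: subset_leq_card.
by apply/subsetP => u; rewrite !inE => /andP[].
Qed.

Lemma nbhdD1 (S : {set T}) v u : nbhd (S :\ v) u = nbhd S u :\ v.
Proof. by apply/setP => x; rewrite !inE andbA. Qed.

Lemma card_nbhdD1 (S : {set T}) v u : v \in nbhd S u -> #|nbhd (S :\ v) u| + 1 = #|nbhd S u|.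
Proof. by move=> vN; rewrite nbhdD1 (cardsD1 v (nbhd S u)) vN addnC. Qed.

Lemma nbhd_del_le1 (S : {set T}) v u : v \in nbhd S u -> #|nbhd (S :\ v) u| <= 1.
Proof. by move/card_nbhdD1 => dv; rewrite -(leq_add2r 1) dv; exact: nbhd_le2. Qed.

Lemma nbhd_sym (S : {set T}) u v : u \in S -> v \in nbhd S u -> u \in nbhd S v.
Proof. by move=> uS; rewrite !inE uS f_sym => /andP[]. Qed.

Lemma nbhd_neq (S : {set T}) u v : v \in nbhd S u -> v != u.
Proof. by rewrite inE => /andP[_]; apply: contraTneq => ->; rewrite f_irr. Qed.

Lemma inner_edges0 : #|inner_edges set0| = 0.
Proof.
apply: eq_card0 => A; rewrite inE; apply/negbTE/andP => -[/edgesP[x [y [_ ->]]]].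
by move/subsetP/(_ x (set21 x y)); rewrite inE.
Qed.

Lemma inner_edgesT : inner_edges [set: T] = edges f.
Proof. by apply/setP => A; rewrite inE subsetT andbT. Qed.

Lemma inner_edges_del (S : {set T}) v :
  #|inner_edges S| <= #|inner_edges (S :\ v)| + #|nbhd S v|.
Proof.
apply: (@leq_trans #|inner_edges (S :\ v) :|: [set [set v; u] | u in nbhd S v]|).
  apply/subset_leq_card/subsetP => A; rewrite inE => /andP[AE /subsetP AS].
  have /edgesP[x [y [fxy EA]]] := AE; rewrite in_setU.
  have [vA|vA] := boolP (v \in A); last first.
    rewrite inE AE; apply/orP/or_introl/subsetP => z zA.
    by rewrite !inE (AS _ zA) andbT; apply: contraNneq vA => <-.
  apply/orP/or_intror/imsetP; move: vA AS; rewrite EA => /set2P[] ? AS; subst.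
    by exists y; rewrite // inE fxy AS ?set22.
  by exists x; rewrite 1?setUC // inE f_sym fxy AS ?set21.
rewrite cardsU; apply: leq_trans (leq_subr _ _) _.
by rewrite leq_add2l leq_imset_card.
Qed.

Lemma nbhd_subD1 (S : {set T}) v u : u \in nbhd S v -> u \in S :\ v.
Proof. by move=> uN; rewrite !inE (nbhd_neq uN); case/setIdP: uN. Qed.

Lemma spans0 : spans set0 [::].
Proof. by split => // x; rewrite inE. Qed.

Lemma spans_cons (S : {set T}) v s : v \in S -> spans (S :\ v) s -> spans S (v :: s).
Proof.
move=> vS [us ms]; split; first by rewrite cons_uniq us ms !inE eqxx.
by move=> x; rewrite in_cons ms !inE; case: eqVneq => // ->.
Qed.

Lemma orderable0 : orderable set0.
Proof. by exists [::]; rewrite /covers_well inner_edges0; split; first exact: spans0. Qed.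

(* Vertex of degree 0: prepend it to an ordering of the rest.  Degree 1
   with neighbour [u]: prepend it to an ordering of the rest starting at [u],
   which then has degree <= 1, gaining the edge [v u]. *)
Lemma start_pendant (S : {set T}) v :
  v \in S -> #|nbhd S v| <= 1 ->
  orderable (S :\ v) -> pendant_start (S :\ v) -> orderable_from S v 0.
Proof.
move=> vS dv [s [sp hs]] startD; have XS := inner_edges_del S v.
have [d0|/card_gt0P[u uN]] := posnP #|nbhd S v|.
  exists s; split; first exact: spans_cons.
  by have := adj_count_cons f v s; lia.
have [t [tp ht]] := startD u (nbhd_subD1 uN) (nbhd_del_le1 (nbhd_sym vS uN)).
exists (u :: t); split; first exact: spans_cons.
by move: uN; rewrite adj_count_cons2 inE => /andP[_ ->]; rewrite add1n; lia.
Qed.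

(* For a path v - u - w, prepend [v; u] to an ordering of S - {v, u}
   starting at [w]: two edges are gained and at most two are lost. *)
Lemma start_pendant_path (S : {set T}) v u w :
  v \in S -> #|nbhd S v| <= 1 -> u \in nbhd S v -> w \in nbhd S u -> w != v ->
  pendant_start (S :\ v :\ u) -> orderable_from S v 2.
Proof.
move=> vS dv uN wN wv startD.
have uS' := nbhd_subD1 uN.
have wN' : w \in nbhd (S :\ v) u by rewrite nbhdD1 in_setD1 wv.
have [t [tp ht]] := startD w (nbhd_subD1 wN') (nbhd_del_le1 (nbhd_sym uS' wN')).
exists (u :: w :: t); split; first exact: spans_cons vS (spans_cons uS' tp).
have XS := inner_edges_del S v; have XS' := inner_edges_del (S :\ v) u.
have du := nbhd_del_le1 (nbhd_sym vS uN).
move: uN wN; rewrite !adj_count_cons2 !inE => /andP[_ ->] /andP[_ ->].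
by rewrite !add1n; lia.
Qed.

(* If some vertex has degree <= 1, start there.  Otherwise every vertex has
   degree exactly 2: pick [w] with neighbour [a]; in S - {w}, [a] has degree 1
   with neighbour [a'], which has a second neighbour [c], and [c != w] since
   [w a a'] is not a triangle.  Prepend [w] to the bonus-2 ordering of
   S - {w} along the path a - a' - c. *)
Lemma orderable_all (S : {set T}) :
  pendant_start S -> (forall w, w \in S -> pendant_path_start (S :\ w)) ->
  orderable S.
Proof.
move=> startS startD.
have [/exists_inP[v vS dv]|/exists_inPn high] := boolP [exists v in S, #|nbhd S v| <= 1].
  by have [t [tp ht]] := startS v vS dv; exists (v :: t).
have [->|[w wS]] := set_0Vmem S; first exact: orderable0.
have deg2 x : x \in S -> 1 < #|nbhd S x| by move/high; rewrite ltnNge.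
have /card_gt0P[a aN] : 0 < #|nbhd S w| by apply: leq_trans (deg2 w wS).
have aS' := nbhd_subD1 aN; have aS : a \in S by case/setD1P: aS'.
have /card_gt0P[a' a'N] : 0 < #|nbhd (S :\ w) a|.
  by rewrite -(ltn_add2r 1) card_nbhdD1 ?deg2 // nbhd_sym.
have a'S : a' \in S by move: (nbhd_subD1 a'N); rewrite !inE => /and3P[].
have /card_gt0P[c] : 0 < #|nbhd S a' :\ a|.
  rewrite -(ltn_add2l (a \in nbhd S a')) -cardsD1 addn0.
  exact: leq_ltn_trans (leq_b1 _) (deg2 a' a'S).
rewrite !inE => /andP[ca /andP[cS fa'c]].
have faa' : f a a' by case/setIdP: a'N.
have fwa : f w a by case/setIdP: aN.
have cw : c != w.
  by apply/eqP => cw; subst c; apply: (f_tri fwa _ faa'); rewrite f_sym.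
have cN : c \in nbhd (S :\ w) a' by rewrite !inE cw cS fa'c.
have [t [tp ht]] := startD w wS a a' c aS' (nbhd_del_le1 (nbhd_sym wS aN)) a'N cN ca.
exists (w :: a :: t); split; first exact: spans_cons.
have XS := inner_edges_del S w; have dw := nbhd_le2 S w.
rewrite adj_count_cons2 fwa add1n; clear -ht XS dw; lia.
Qed.

Lemma good_orderings n (S : {set T}) : #|S| <= n ->
  [/\ orderable S, pendant_start S & pendant_path_start S].
Proof.
elim: n S => [|n IH] S szS.
  have -> : S = set0 by apply/eqP; rewrite -cards_eq0 -leqn0.
  by split; [exact: orderable0 | move=> v; rewrite inE..].
have szD v : v \in S -> #|S :\ v| <= n.
  by move=> vS; rewrite -ltnS (leq_trans _ szS) // (cardsD1 v S) vS.
have startS : pendant_start S.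
  move=> v vS dv; have [ordD startD _] := IH _ (szD v vS).
  exact: start_pendant.
have pathS : pendant_path_start S.
  move=> v u w vS dv uN wN wv; apply: (start_pendant_path vS dv uN wN wv).
  by have [] := IH (S :\ v :\ u) (leq_trans (subset_leq_card (subD1set _ u)) (szD v vS)).
split=> //; apply: orderable_all => // w wS.
by have [] := IH _ (szD w wS).
Qed.

Theorem three_quarter_ordering :
  exists s : seq T, perm_eq s (enum T) /\ 3 * #|edges f| <= 4 * adj_count f s.
Proof.
have [[s [[us ms] hs]] _ _] := good_orderings (leqnn #|[set: T]|).
exists s; split; last by rewrite -inner_edgesT -[3 * _]addn0.
by apply: uniq_perm (enum_uniq T) _ => // x; rewrite ms mem_enum !inE.
Qed.

End PathCover.

Lemma matching_incident (T : finType) (e : rel T) (M : {set {set T}}) A B x :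
  is_matching e M -> A \in M -> B \in M -> x \in A -> x \in B -> A = B.
Proof.
case=> _ dis AM BM xA xB; apply/eqP; apply: contraTT isT => AB.
by have /disjointFr/(_ xA) := dis _ _ AM BM AB; rewrite xB.
Qed.

Section MatchingPair.

Variables (T : finType) (e : rel T) (M1 M2 : {set {set T}}).
Hypothesis e_sym : symmetric e.
Hypothesis e_irr : irreflexive e.
Hypothesis M12 : matching_pair e M1 M2.

Lemma matching_partner (M : {set {set T}}) x y z :
  is_matching e M -> [set x; y] \in M -> [set x; z] \in M -> y = z.
Proof.
move=> hM Mxy Mxz; have E := matching_incident hM Mxy Mxz (set21 x y) (set21 x z).
have /set2P[yx|//] : y \in [set x; z] by rewrite -E set22.
have exy : e x y by apply: edge_pair e_sym _; case: hM => /subsetP sub _; exact: sub.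
by move: exy; rewrite yx e_irr.
Qed.

Definition pair_rel : rel T := fun x y => [set x; y] \in M1 :|: M2.

Lemma union_edges : M1 :|: M2 \subset edges e.
Proof. by case: M12 => [[s1 _] [[s2 _] _]]; rewrite subUset s1 s2. Qed.

Lemma pair_rel_edge : subrel pair_rel e.
Proof. by move=> x y /(subsetP union_edges)/edge_pair; apply. Qed.

Lemma pair_rel_sym : symmetric pair_rel.
Proof. by move=> x y; rewrite /pair_rel setUC. Qed.

Lemma pair_rel_irr : irreflexive pair_rel.
Proof. by move=> x; apply/negP => /pair_rel_edge; rewrite e_irr. Qed.

Lemma edges_pair_rel : edges pair_rel = M1 :|: M2.
Proof.
apply/setP => A; apply/edgesP/idP => [[x [y [pxy ->]]] //|AM].
by have /edgesP[x [y [_ EA]]] := subsetP union_edges _ AM; exists x, y; rewrite /pair_rel -EA.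
Qed.

(* Each vertex has at most one partner in each matching. *)
Lemma pair_rel_deg2 v : #|[set u | pair_rel v u]| <= 2.
Proof.
have [hM1 [hM2 _]] := M12.
have partner M : is_matching e M -> #|[set u | [set v; u] \in M]| <= 1.
  move=> hM; apply/card_le1_eqP => y z; rewrite !inE => My Mz.
  exact/esym/(matching_partner hM My Mz).
apply: leq_trans (leq_add (partner _ hM1) (partner _ hM2)).
apply: leq_trans (leq_card_setU _ _); apply/subset_leq_card/subsetP => u.
by rewrite !inE /pair_rel inE.
Qed.

Lemma incident_colours A B x :
  A \in M1 :|: M2 -> B \in M1 :|: M2 -> A != B -> x \in A -> x \in B ->
  (A \in M1) != (B \in M1).
Proof.
have [hM1 [hM2 _]] := M12; rewrite !inE => AM BM AB xA xB.
have same M : is_matching e M -> A \in M -> B \in M -> False.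
  by move=> hM AM' BM'; rewrite (matching_incident hM AM' BM' xA xB) eqxx in AB.
case: (boolP (A \in M1)) AM => [AM1 _|AM1 /= AM2]; case: (boolP (B \in M1)) BM => //.
- by move=> BM1 _; case: (same _ hM1 AM1 BM1).
- by move=> _ /= BM2; case: (same _ hM2 AM2 BM2).
Qed.

(* The three edges of a triangle are pairwise distinct and pairwise incident,
   so by [incident_colours] their membership in [M1] would be three pairwise
   different booleans. *)
Lemma pair_rel_triangle_free a b c :
  pair_rel a b -> pair_rel a c -> pair_rel b c -> False.
Proof.
move=> pab pac pbc.
have off x y z : pair_rel x z -> pair_rel y z -> z \notin [set x; y].
  move=> pxz pyz; apply/set2P => -[] zE; subst z.
    by rewrite pair_rel_irr in pxz.
  by rewrite pair_rel_irr in pyz.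
have sep (A B : {set T}) z : z \notin A -> z \in B -> A != B.
  by move=> zA zB; apply: (contraNneq _ zA) => ->.
have off_a : a \notin [set b; c] by rewrite off // pair_rel_sym.
have ab_ac : [set a; b] != [set a; c] by apply: sep (off _ _ _ pac pbc) (set22 a c).
have ab_bc : [set a; b] != [set b; c] by rewrite eq_sym; apply: sep off_a (set21 a b).
have ac_bc : [set a; c] != [set b; c] by rewrite eq_sym; apply: sep off_a (set21 a c).
have := incident_colours pab pac ab_ac (set21 a b) (set21 a c).
have := incident_colours pab pbc ab_bc (set22 a b) (set21 b c).
have := incident_colours pac pbc ac_bc (set22 a c) (set22 b c).
by case: ([set a; b] \in M1); case: ([set a; c] \in M1); case: ([set b; c] \in M1).
Qed.

End MatchingPair.

Lemma D12_adj (T : finType) (e f : rel T) x y : subrel f e -> D12 e x y + f x y <= 2.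
Proof. by rewrite /D12 => fe; case fxy: (f x y); [rewrite (fe _ _ fxy)|case: (e x y)]. Qed.

Lemma path_cost_adj (T : finType) (e f : rel T) z : subrel f e -> forall x t,
  \sum_(p <- zip (x :: t) (rcons t z)) D12 e p.1 p.2 + adj_count f (x :: t)
    <= 2 * (size t).+1.
Proof.
move=> fe x t; elim: t x => [|y t IH] x.
  by rewrite /= big_seq1 /D12; case: ifP.
rewrite rcons_cons [zip _ _]/= big_cons adj_count_cons2.
change (D12 e (x, y).1 (x, y).2) with (D12 e x y).
by have := IH y; have := D12_adj x y fe; rewrite [size (y :: t)]/=; lia.
Qed.

Lemma tour_cost_adj (T : finType) (e f : rel T) (s : seq T) :
  subrel f e -> tour_cost e s + adj_count f s <= 2 * size s.
Proof.
move=> fe; case: s => [|x t]; first by rewrite /tour_cost big_nil.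
by rewrite /tour_cost rot1_cons; exact: path_cost_adj.
Qed.

Lemma bigmin_le (I : eqType) (r : seq I) (F : I -> nat) x0 j :
  j \in r -> \big[minn/x0]_(i <- r) F i <= F j.
Proof.
elim: r => [|a r IH] //; rewrite in_cons big_cons => /orP[/eqP ->|jr].
  exact: geq_minl.
exact: leq_trans (geq_minr _ _) (IH jr).
Qed.

Lemma tsp_le_tour (T : finType) (e : rel T) (s : seq T) :
  perm_eq s (enum T) -> tsp12_cost e <= tour_cost e s.
Proof. by move=> ps; apply: bigmin_le; rewrite mem_permutations. Qed.

Theorem mainTheorem16 (T : finType) (e : rel T) (M1 M2 : {set {set T}}) :
  symmetric e -> irreflexive e -> 2 <= #|T| ->
  matching_pair e M1 M2 ->
  4 * tsp12_cost e + 3 * (#|M1| + #|M2|) <= 8 * #|T|.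
Proof.
move=> e_sym e_irr _ M12.
have [s [ps cover]] := three_quarter_ordering (pair_rel_sym M1 M2)
  (pair_rel_irr e_sym e_irr M12) (pair_rel_deg2 e_sym e_irr M12)
  (pair_rel_triangle_free e_sym e_irr M12).
have cardF : #|edges (pair_rel M1 M2)| = #|M1| + #|M2|.
  by rewrite (edges_pair_rel M12) cardsU; case: M12 => _ [_ ->]; rewrite cards0 subn0.
have size_s : size s = #|T| by rewrite (perm_size ps) cardE.
have tour := tour_cost_adj s (pair_rel_edge e_sym M12).
rewrite size_s in tour; rewrite cardF in cover.
by have := tsp_le_tour e ps; lia.
Qed.
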